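(* Let $\lambda\in D\setminus\{0\}$ and put $\widetilde g^\lambda(z)=\sum_{m=0}^\infty\lambda^{\sigma_\infty(m)}z^m$ for $z\in D$. Then \[ \mathcal{F}\big(\widetilde g^\lambda-1\big)=\frac{\widetilde g^\lambda-1}{\lambda}+\Big(\lambda-\frac1\lambda\Big)z . \]
   Context: $T$ is the Collatz map $T(n)=\frac{3n+1}2$ ($n$ odd), $T(n)=\frac n2$ ($n$ even). The total stopping time $\sigma_\infty(n)$, for a positive integer $n$, is the least $k\ge0$ with $T^k(n)=1$ (and $\sigma_\infty(n)=\infty$ if no such $k$ exists); also $\sigma_\infty(0):=0$. Convention: $\lambda^\infty=0$ for $|\lambda|<1$. $D$ is the open unit disk, $A(D)$ the holomorphic functions on $D$, and $\mathcal{F}$ the operator on $A(D)$ given by $\mathcal{F}\big(\sum_{n\ge0}a_nz^n\big)=\sum_{n\ge0}a_nz^{2n}+\sum_{k\ge0}a_{3k+2}z^{2k+1}$. *)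

From Stdlib Require Import Reals ClassicalEpsilon Arith.
From Coquelicot Require Import Coquelicot.

Definition collatzT (n : nat) : nat :=
  if Nat.even n then (n / 2)%nat else ((3 * n + 1) / 2)%nat.

(* Specification of the total stopping time: [Some k] = least k with T^k(n) = 1,
   [None] = infinity (no such k). *)
Definition is_total_stopping (n : nat) (s : option nat) : Prop :=
  match s with
  | Some k => Nat.iter k collatzT n = 1%nat /\ (forall j, (j < k)%nat -> Nat.iter j collatzT n <> 1%nat)
  | None => forall k, Nat.iter k collatzT n <> 1%nat
  end.

(* sigma_infty(n); with the convention sigma_infty(0) := 0. *)
Definition sigma_inf (n : nat) : option nat :=
  match n with
  | 0%nat => Some 0%nat
  | _ => epsilon (inhabits None) (is_total_stopping n)
  end.

(* lambda ^ s, with the convention lambda^infty = 0 (|lambda| < 1). *)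
Definition lam_pow (lam : C) (s : option nat) : C :=
  match s with
  | Some k => Cpow lam k
  | None => RtoC 0
  end.

Definition gcoef (lam : C) (m : nat) : C := lam_pow lam (sigma_inf m).

(* The operator F acting on Taylor coefficient sequences:
   F(sum a_n z^n) = sum a_n z^{2n} + sum a_{3k+2} z^{2k+1}, i.e. the image has
   coefficient a_{m/2} at even m and a_{3k+2} at m = 2k+1. *)
Definition Fcoef (a : nat -> C) (m : nat) : C :=
  if Nat.even m then a (m / 2)%nat else a (3 * (m / 2) + 2)%nat.

Definition sub1coef (a : nat -> C) (n : nat) : C :=
  match n with 0%nat => Cminus (a 0%nat) (RtoC 1) | _ => a n end.

From Stdlib Require Import Reals ClassicalEpsilon Arith Lia Lra Wf_nat.
From Coquelicot Require Import Coquelicot.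

(* Every n >= 2 reaches 1 only by passing through T(n), so
   sigma_inf(n) = sigma_inf(T n) + 1 and the coefficients g_m = lam^sigma_inf(m)
   satisfy g_n = lam g_(T n) for n >= 2.  As T(2j) = j and T(2k+1) = 3k+2, the
   coefficient of F(g - 1) at 2j is g_j = g_(2j) / lam and the one at 2k+1 is
   g_(3k+2) = g_(2k+1) / lam.  The recursion fails only at the low indices
   0, 1, 2 (with g_0 = g_1 = 1, g_2 = lam), which produce the correction
   (lam - 1/lam) z.  All series converge because |g_m| <= 1. *)

Lemma is_total_stopping_unique n s s' :
  is_total_stopping n s -> is_total_stopping n s' -> s = s'.
Proof.
  destruct s as [k|], s' as [k'|]; simpl.
  - intros [Hk Hmin] [Hk' Hmin'].
    destruct (lt_eq_lt_dec k k') as [[Hlt | ->] | Hlt].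
    + exfalso; exact (Hmin' k Hlt Hk).
    + reflexivity.
    + exfalso; exact (Hmin k' Hlt Hk').
  - intros [Hk _] Hnever; exfalso; exact (Hnever k Hk).
  - intros Hnever [Hk' _]; exfalso; exact (Hnever k' Hk').
  - reflexivity.
Qed.

Lemma is_total_stopping_exists n : exists s, is_total_stopping n s.
Proof.
  destruct (classic (exists k, Nat.iter k collatzT n = 1%nat)) as [Hreach|Hnever].
  - destruct (dec_inh_nat_subset_has_unique_least_element _ (fun k => classic _) Hreach)
      as [k [[Hk Hmin] _]].
    exists (Some k); split; [exact Hk|].
    intros j Hj Hiter; specialize (Hmin j Hiter); lia.
  - exists None; intros k Hk; apply Hnever; exists k; exact Hk.
Qed.

Lemma sigma_inf_spec n : n <> 0%nat -> is_total_stopping n (sigma_inf n).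
Proof.
  destruct n as [|n]; [contradiction|intros _].
  unfold sigma_inf; apply epsilon_spec, is_total_stopping_exists.
Qed.

Lemma sigma_inf_1 : sigma_inf 1 = Some 0%nat.
Proof.
  apply (is_total_stopping_unique 1); [apply sigma_inf_spec; discriminate|].
  split; [reflexivity|intros j Hj; lia].
Qed.

Lemma is_total_stopping_collatzT n s :
  n <> 1%nat -> is_total_stopping (collatzT n) s -> is_total_stopping n (option_map S s).
Proof.
  intros Hn; destruct s as [k|]; cbn [is_total_stopping option_map].
  - intros [Hk Hmin]; split.
    + rewrite Nat.iter_succ_r; exact Hk.
    + intros [|j] Hj; [exact Hn|].
      rewrite Nat.iter_succ_r; apply Hmin; lia.
  - intros Hnever [|k]; [exact Hn|].
    rewrite Nat.iter_succ_r; apply Hnever.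
Qed.

Lemma collatzT_double j : collatzT (2 * j) = j.
Proof.
  unfold collatzT; rewrite Nat.even_mul; simpl Nat.even; cbn iota.
  rewrite Nat.mul_comm; apply Nat.div_mul; discriminate.
Qed.

Lemma collatzT_double_succ k : collatzT (2 * k + 1) = (3 * k + 2)%nat.
Proof.
  unfold collatzT; rewrite Nat.add_comm, Nat.even_add_mul_2; simpl Nat.even; cbn iota.
  replace (3 * (1 + 2 * k) + 1)%nat with ((3 * k + 2) * 2)%nat by lia.
  apply Nat.div_mul; discriminate.
Qed.

Lemma collatzT_neq0 n : n <> 0%nat -> collatzT n <> 0%nat.
Proof.
  destruct (Nat.Even_or_Odd n) as [[j ->] | [k ->]].
  - rewrite collatzT_double; lia.
  - rewrite collatzT_double_succ; lia.
Qed.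

Lemma sigma_inf_collatzT n :
  (2 <= n)%nat -> sigma_inf n = option_map S (sigma_inf (collatzT n)).
Proof.
  intros Hn; apply (is_total_stopping_unique n).
  - apply sigma_inf_spec; lia.
  - apply is_total_stopping_collatzT; [lia|].
    apply sigma_inf_spec, collatzT_neq0; lia.
Qed.

Lemma gcoef_collatzT lam n :
  (2 <= n)%nat -> gcoef lam n = (lam * gcoef lam (collatzT n))%C.
Proof.
  intros Hn; unfold gcoef; rewrite (sigma_inf_collatzT n Hn).
  destruct (sigma_inf (collatzT n)); simpl; [reflexivity|].
  symmetry; apply Cmult_0_r.
Qed.

Lemma gcoef_1 lam : gcoef lam 1 = 1%C.
Proof. unfold gcoef; rewrite sigma_inf_1; reflexivity. Qed.

Lemma gcoef_2 lam : gcoef lam 2 = lam.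
Proof.
  rewrite (gcoef_collatzT lam 2) by lia.
  change (collatzT 2) with 1%nat; rewrite gcoef_1; apply Cmult_1_r.
Qed.

Lemma Cmod_gcoef_le_1 lam m : (Cmod lam < 1)%R -> (Cmod (gcoef lam m) <= 1)%R.
Proof.
  intros Hlam; unfold gcoef, lam_pow; destruct (sigma_inf m) as [k|].
  - rewrite Cmod_pow, <- (pow1 k).
    apply pow_incr; split; [apply Cmod_ge_0|lra].
  - rewrite Cmod_0; lra.
Qed.

Lemma Fcoef_double a j : Fcoef a (2 * j) = a j.
Proof.
  unfold Fcoef; rewrite Nat.even_mul; simpl Nat.even; cbn iota.
  rewrite Nat.mul_comm, Nat.div_mul; [reflexivity|discriminate].
Qed.

Lemma Fcoef_double_succ a k : Fcoef a (2 * k + 1) = a (3 * k + 2)%nat.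
Proof.
  unfold Fcoef; rewrite Nat.add_comm, Nat.even_add_mul_2; simpl Nat.even; cbn iota.
  rewrite (Nat.add_b2n_double_div2 true k : ((1 + 2 * k) / 2)%nat = k); reflexivity.
Qed.

Lemma sub1coef_neq0 a n : n <> 0%nat -> sub1coef a n = a n.
Proof. destruct n; [contradiction|reflexivity]. Qed.

Lemma Fcoef_sub1coef_gcoef (lam : C) m : lam <> 0%C ->
  Fcoef (sub1coef (gcoef lam)) m =
  (sub1coef (gcoef lam) m / lam + if (m =? 1)%nat then lam - 1 / lam else 0)%C.
Proof.
  intros Hlam.
  destruct (Nat.Even_or_Odd m) as [[[|j] ->] | [[|k] ->]].
  - cbn; unfold Cminus; rewrite Cplus_opp_r; field; exact Hlam.
  - rewrite Fcoef_double, !sub1coef_neq0 by lia.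
    replace (2 * S j =? 1)%nat with false by (symmetry; apply Nat.eqb_neq; lia).
    rewrite (gcoef_collatzT lam (2 * S j)), collatzT_double by lia.
    field; exact Hlam.
  - rewrite Fcoef_double_succ; cbn [Nat.mul Nat.add Nat.eqb sub1coef].
    rewrite gcoef_2, gcoef_1; field; exact Hlam.
  - rewrite Fcoef_double_succ, !sub1coef_neq0 by lia.
    replace (2 * S k + 1 =? 1)%nat with false by (symmetry; apply Nat.eqb_neq; lia).
    rewrite (gcoef_collatzT lam (2 * S k + 1)), collatzT_double_succ by lia.
    field; exact Hlam.
Qed.

Section IndicatorSeries.

Context {K : AbsRing} {V : NormedModule K}.

Lemma is_series_zero : is_series (fun _ : nat => (zero : V)) zero.
Proof.
  apply (filterlim_ext (fun _ => zero)); [intro n; symmetry; apply sum_n_m_const_zero|].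
  apply filterlim_const.
Qed.

Lemma is_series_indicator (k : nat) (w : V) :
  is_series (fun m => if (m =? k)%nat then w else zero) w.
Proof.
  revert w; induction k as [|k IHk]; intros w; apply is_series_decr_1; simpl.
  - rewrite (@plus_opp_r V); exact is_series_zero.
  - (* [rewrite] cannot see [opp zero] here: its [zero] is packed through a
       different but convertible canonical structure, so we transport instead. *)
    assert (Hw : w = plus w (opp zero)) by (rewrite opp_zero; symmetry; apply plus_zero_r).
    exact (eq_ind _ (is_series _) (IHk w) _ Hw).
Qed.

End IndicatorSeries.

Lemma ex_series_bounded_coef (a : nat -> C) (z : C) :
  (forall m, Cmod (a m) <= 1)%R -> (Cmod z < 1)%R ->
  ex_series (fun m => (a m * z ^ m)%C).
Proof.
  intros Ha Hz.
  apply (@ex_series_le C_AbsRing C_CompleteNormedModule _ (fun m => Cmod z ^ m)%R).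
  - intros m; change (Cmod (a m * z ^ m)%C <= Cmod z ^ m)%R.
    rewrite Cmod_mult, Cmod_pow; rewrite <- (Rmult_1_l (Cmod z ^ m)%R) at 2.
    apply Rmult_le_compat_r; [apply pow_le, Cmod_ge_0|apply Ha].
  - exists (/ (1 - Cmod z))%R; apply is_series_geom.
    rewrite Rabs_pos_eq; [exact Hz|apply Cmod_ge_0].
Qed.

Lemma is_series_sub1coef (a : nat -> C) (z l : C) :
  is_series (fun m => (a m * z ^ m)%C) l ->
  is_series (fun m => (sub1coef a m * z ^ m)%C) (l - 1)%C.
Proof.
  intros Hl.
  pose proof (is_series_plus _ _ _ _ Hl (is_series_indicator 0 (Copp 1))) as H.
  refine (is_series_ext _ _ _ _ H); intros [|m]; cbn -[Cmult Cplus Copp].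
  - unfold Cminus; ring.
  - apply Cplus_0_r.
Qed.

Theorem mainTheorem10 (lam : C) (hlam0 : lam <> RtoC 0) (hlam1 : (Cmod lam < 1)%R) :
  forall z : C, (Cmod z < 1)%R ->
  exists g : C,
    is_series (fun m => Cmult (gcoef lam m) (Cpow z m)) g /\
    is_series (fun m => Cmult (Fcoef (sub1coef (gcoef lam)) m) (Cpow z m))
      (Cplus (Cdiv (Cminus g (RtoC 1)) lam)
             (Cmult (Cminus lam (Cdiv (RtoC 1) lam)) z)).
Proof.
  intros z Hz.
  destruct (ex_series_bounded_coef (gcoef lam) z
              (fun m => Cmod_gcoef_le_1 lam m hlam1) Hz) as [g Hg].
  exists g; split; [exact Hg|].
  pose proof (is_series_plus _ _ _ _
                (is_series_scal (/ lam)%C _ _ (is_series_sub1coef _ _ _ Hg))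
                (is_series_indicator 1 ((lam - 1 / lam) * z)%C)) as H.
  replace (Cplus _ _) with (plus (scal (/ lam)%C (g - 1)%C) ((lam - 1 / lam) * z)%C)
    by (cbn; field; exact hlam0).
  refine (is_series_ext _ _ _ _ H); intros m; cbn.
  rewrite (Fcoef_sub1coef_gcoef lam m hlam0).
  destruct (Nat.eqb_spec m 1) as [-> | _]; cbn; field; exact hlam0.
Qed.
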